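(* Let $A$ be an effect on a complex separable Hilbert space $\mathcal{H}$, $A'=I-A$, and define $\mathfrak{W}(\sigma_A):=\|A\|+\|A'\|-1$ and $\mathfrak{D}(\sigma_A):=\|AA'\|+\|I-AA'\|-1$. Then: (a) $0\le\mathfrak{W}(\sigma_A)-\mathfrak{D}(\sigma_A)\le1$; (b) $\mathfrak{W}(\sigma_A)-\mathfrak{D}(\sigma_A)=0$ if and only if $A$ is trivial; (c) $\mathfrak{W}(\sigma_A)-\mathfrak{D}(\sigma_A)=1$ if and only if $A$ is a nontrivial projection.
   Context: An effect is a selfadjoint bounded operator $A$ with $\mathbb{O}\le A\le I$; it is trivial if $A=\lambda I$ for some $\lambda\in[0,1]$; a nontrivial projection is a projection $P=P^2=P^*$ with $P\ne\mathbb{O},I$. Norms are operator norms. *)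

From HB Require Import structures.
From mathcomp Require Import all_boot all_order all_algebra.
From mathcomp Require Import complex.
From mathcomp Require Import boolp classical_sets reals.
Set Implicit Arguments. Unset Strict Implicit. Unset Printing Implicit Defensive.
Import Order.TTheory GRing.Theory Num.Theory.
Local Open Scope classical_set_scope.
Local Open Scope ring_scope.

Section Hilbert.
Variables (R : realType) (H : lmodType R[i]) (ip : H -> H -> R[i]).

Definition inner_product_axioms : Prop :=
  [/\ forall (a : R[i]) x y z, ip (a *: x + y) z = a * ip x z + ip y z,
      forall x y, ip y x = (ip x y)^*,
      forall x, 0 <= ip x x
    & forall x, ip x x = 0 -> x = 0].

Definition hnorm (x : H) : R := Num.sqrt (complex.Re (ip x x)).

Definition hcomplete : Prop :=
  forall u : nat -> H,
    (forall e : R, 0 < e -> exists N, forall m n, (N <= m)%N -> (N <= n)%N ->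
        hnorm (u m - u n) < e) ->
    exists l : H, forall e : R, 0 < e -> exists N, forall n, (N <= n)%N ->
        hnorm (u n - l) < e.

Definition hseparable : Prop :=
  exists d : nat -> H, forall x e, 0 < e -> exists n, hnorm (x - d n) < e.

Definition separable_hilbert : Prop :=
  [/\ inner_product_axioms, hcomplete & hseparable].

Definition bounded_op (A : H -> H) : Prop :=
  linear A /\ exists M : R, forall x, hnorm (A x) <= M * hnorm x.

Definition opnorm (A : H -> H) : R :=
  sup [set hnorm (A x) | x in [set x | hnorm x <= 1]].

Definition selfadjoint (A : H -> H) : Prop :=
  forall x y, ip (A x) y = ip x (A y).

Definition effect (A : H -> H) : Prop :=
  [/\ bounded_op A, selfadjoint A &
      forall x, 0 <= ip (A x) x /\ ip (A x) x <= ip x x].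

Definition trivial_effect (A : H -> H) : Prop :=
  exists l : R, 0 <= l <= 1 /\ forall x, A x = (Complex l 0) *: x.

Definition nontrivial_projection (A : H -> H) : Prop :=
  [/\ bounded_op A, forall x, A (A x) = A x, selfadjoint A,
      A <> (fun _ => 0) & A <> id].

Definition compl_op (A : H -> H) : H -> H := fun x => x - A x.
Definition comp_op (A B : H -> H) : H -> H := fun x => A (B x).
Definition id_op : H -> H := fun x => x.

Definition Wcoh (A : H -> H) : R := opnorm A + opnorm (compl_op A) - 1.
Definition Dcoh (A : H -> H) : R :=
  opnorm (comp_op A (compl_op A)) + opnorm (compl_op (comp_op A (compl_op A))) - 1.

End Hilbert.

From HB Require Import structures.
From mathcomp Require Import all_boot all_order all_algebra.
From mathcomp Require Import complex.
From mathcomp Require Import boolp classical_sets reals.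
From mathcomp Require Import ring lra.
Set Implicit Arguments. Unset Strict Implicit. Unset Printing Implicit Defensive.
Import Order.TTheory GRing.Theory Num.Theory.
Local Open Scope classical_set_scope.
Local Open Scope ring_scope.
Local Open Scope complex_scope.

(* For an effect T the operator norm is the top of the numerical range,
   sup {<Tx, x> : |x| <= 1}.  Let m <= M be the bottom and the top of the
   numerical range of A, so that W = M - m, while D is the spread of the
   numerical range of AA' = f(A), f(t) = t - t^2.  For a unit vector x put
   a = <Ax, x> in [m, M] and b = |Ax|^2; then a^2 <= b <= (m + M) a - m M, the
   upper bound being positivity of (A - m)(M - A).  Hence <AA'x, x> = a - b lies
   between the minimum and the maximum of f on [m, M], whose difference is
   < M - m as soon as m < M because |f'| < 1 on (0, 1).  So W - D >= 0, with
   equality iff m = M, i.e. A = m I.  Also W <= 1 and D >= 0, and W - D = 1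
   forces m = 0, M = 1 and <AA'x, x> = 0, i.e. A^2 = A. *)

(* Here a = <Ax, x>, b = |Ax|^2 and n = |x|^2; the last hypothesis is the
   Cauchy-Schwarz bound a^2 <= b n without division; the witnesses c, d are
   the maximum and the minimum of t - t^2 on [m, M]. *)
Lemma numerical_range_gap (R : realFieldType) (m M : R) :
  0 <= m -> m < M -> M <= 1 ->
  exists c d, [/\ 0 <= c, d <= 1, c - d < M - m &
    forall a b n : R, 0 <= n -> m * n <= a -> a <= M * n ->
      b <= (m + M) * a - m * M * n -> (forall t, 2 * t * a - t * t * n <= b) ->
      d * n <= a - b <= c * n].
Proof.
move=> m0 mM M1; set h : R := 2^-1.
have h2 : 2 * h = 1 by rewrite mulfV // pnatr_eq0.
have hp : 0 < h by rewrite invr_gt0 ltr0n.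
pose c := if 2 * M <= 1 then M - M * M else if 1 <= 2 * m then m - m * m else h * h.
pose d := if m + M <= 1 then m - m * m else M - M * M.
exists c, d; split.
- by rewrite /c; case: ifP => c1; [|case: ifP => c2]; nra.
- by rewrite /d; case: ifP => c1; nra.
- by rewrite /c /d; case: ifP => c1; case: ifP => c2; try case: ifP => c3; nra.
move=> a b n n0 ma aM bU bL; apply/andP; split.
- by rewrite /d; case: ifP => c1; nra.
- rewrite /c; case: ifP => c1; first by have := bL M; nra.
  by case: ifP => c2; [have := bL m | have := bL h]; nra.
Qed.

Section PreHilbert.
Variables (R : realType) (H : lmodType R[i]) (ip : H -> H -> R[i]).
Hypothesis hip : inner_product_axioms ip.

Definition rdot (x y : H) : R := complex.Re (ip x y).

Lemma ipDl x y z : ip (x + y) z = ip x z + ip y z.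
Proof. by case: hip => ipl _ _ _; rewrite -(scale1r x) ipl mul1r scale1r. Qed.

Lemma ip0l z : ip 0 z = 0.
Proof. by apply: (addrI (ip 0 z)); rewrite -ipDl !addr0. Qed.

Lemma ipZl a x z : ip (a *: x) z = a * ip x z.
Proof. by case: hip => ipl _ _ _; rewrite -(addr0 (a *: x)) ipl ip0l addr0. Qed.

Lemma rdotC x y : rdot x y = rdot y x.
Proof. by case: hip => _ ipJ _ _; rewrite /rdot ipJ; case: (ip y x). Qed.

Lemma rdotDl x y z : rdot (x + y) z = rdot x z + rdot y z.
Proof. by rewrite /rdot ipDl; case: (ip x z); case: (ip y z). Qed.

Lemma rdotDr x y z : rdot z (x + y) = rdot z x + rdot z y.
Proof. by rewrite rdotC rdotDl !(rdotC z). Qed.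

Lemma rdotZl (r : R) x z : rdot (r%:C *: x) z = r * rdot x z.
Proof. by rewrite /rdot ipZl; case: (ip x z) => a b /=; rewrite mul0r subr0. Qed.

Lemma rdotZr (r : R) x z : rdot z (r%:C *: x) = r * rdot z x.
Proof. by rewrite rdotC rdotZl rdotC. Qed.

Lemma rdotNl x z : rdot (- x) z = - rdot x z.
Proof. by rewrite -scaleN1r -(rmorphN1 (real_complex R)) rdotZl mulN1r. Qed.

Lemma rdotNr x z : rdot z (- x) = - rdot z x.
Proof. by rewrite rdotC rdotNl rdotC. Qed.

Lemma rdot0l z : rdot 0 z = 0.
Proof. by rewrite /rdot ip0l. Qed.

Lemma rdot0r z : rdot z 0 = 0.
Proof. by rewrite rdotC rdot0l. Qed.

Definition rdotE := (rdotDl, rdotDr, rdotNl, rdotNr, rdotZl, rdotZr).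

Lemma rdotxx_ge0 x : 0 <= rdot x x.
Proof. by case: hip => _ _ ip_ge0 _; have := ip_ge0 x; rewrite lecE => /andP[]. Qed.

Lemma rdotxx_eq0 x : rdot x x = 0 -> x = 0.
Proof.
case: hip => _ _ ip_ge0 ip_eq0 re0; apply: ip_eq0.
have := ip_ge0 x; rewrite lecE /= => /andP[/eqP im0 _].
by move: re0; rewrite /rdot; case: (ip x x) im0 => a b /= -> ->.
Qed.

Lemma hnormE x : hnorm ip x = Num.sqrt (rdot x x).
Proof. by []. Qed.

Lemma hnorm_le1 x : (hnorm ip x <= 1) = (rdot x x <= 1).
Proof. by rewrite hnormE -{1}sqrtr1 ler_sqrt ?ler01. Qed.

Lemma normalize x : x != 0 -> exists r : R, rdot (r%:C *: x) (r%:C *: x) = 1.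
Proof.
move=> nx; have xx_gt0 : 0 < rdot x x.
  by rewrite lt0r rdotxx_ge0 andbT; apply: contra nx => /eqP/rdotxx_eq0 ->.
exists (Num.sqrt (rdot x x))^-1; rewrite rdotZl rdotZr mulrA -expr2 exprVn.
by rewrite sqr_sqrtr ?mulVf ?gt_eqF // ltW.
Qed.

Lemma trivial_or_unit : (forall x : H, x = 0) \/ exists u, rdot u u = 1.
Proof.
have [[x nx]|no_x] := pselect (exists x : H, x != 0).
  by right; have [r hr] := normalize nx; exists (r%:C *: x).
by left=> x; apply/eqP; apply: contra_notT no_x; exists x.
Qed.

Section LinearMap.
Variable T : H -> H.
Hypothesis lT : linear T.

Lemma lin0 : T 0 = 0.
Proof. by apply: (addrI (T 0)); have := lT 1 0 0; rewrite !scale1r !addr0 => <-. Qed.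

Lemma linD x y : T (x + y) = T x + T y.
Proof. by rewrite -(scale1r x) lT !scale1r. Qed.

Lemma linZ a x : T (a *: x) = a *: T x.
Proof. by rewrite -(addr0 (a *: x)) lT lin0 addr0. Qed.

Lemma linB x y : T (x - y) = T x - T y.
Proof. by rewrite linD -scaleN1r linZ scaleN1r. Qed.

End LinearMap.

Definition rselfadjoint (T : H -> H) := forall x y, rdot (T x) y = rdot x (T y).

(* [effect] with selfadjointness and the order read off the real part of the
   inner product, which is all the estimates below use. *)
Definition reffect (T : H -> H) :=
  [/\ linear T, rselfadjoint T & forall x, 0 <= rdot (T x) x <= rdot x x].

Lemma positive_sq_le (T : H -> H) (k : R) : linear T -> rselfadjoint T ->
    (forall x, 0 <= rdot (T x) x <= k * rdot x x) -> 0 < k ->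
  forall x, rdot (T x) (T x) <= k * rdot (T x) x.
Proof.
move=> lT sT Tk k_gt0 x; set t := k^-1.
have tk : t * k = 1 by rewrite mulVf ?gt_eqF.
have t_gt0 : 0 < t by rewrite invr_gt0.
(* positivity of T at x - t T x *)
have /andP[+ _] := Tk (x - t%:C *: T x).
rewrite (linB lT) (linZ lT) !rdotE (sT (T x) x).
have /andP[_ TTx] := Tk (T x).
set a := rdot (T x) x; set b := rdot (T x) (T x); set g := rdot (T (T x)) (T x).
move: TTx; rewrite -/b -/g => g_le pos.
have tg_le : t * t * g <= t * b.
  have -> : t * b = t * t * (k * b) by rewrite -(mulrA t) (mulrA t k) tk mul1r.
  by rewrite ler_pM2l ?mulr_gt0.
have tb_le : t * b <= a by nra.
by have := ler_wpM2l (ltW k_gt0) tb_le; rewrite mulrA (mulrC k t) tk mul1r.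
Qed.

Lemma reffect_qf_eq0 (T : H -> H) x : reffect T -> rdot (T x) x = 0 -> T x = 0.
Proof.
case=> lT sT Tb qf0; apply: rdotxx_eq0; apply/le_anti; rewrite rdotxx_ge0 andbT.
have := positive_sq_le lT sT _ ltr01 x; rewrite qf0 mulr0; apply.
by move=> y; rewrite mul1r.
Qed.

Definition ball_sup (f : H -> R) : R :=
  sup [set f x | x in [set x | hnorm ip x <= 1]].

Lemma ball_sup_le (f : H -> R) (c : R) :
  (forall x, rdot x x <= 1 -> f x <= c) -> ball_sup f <= c.
Proof.
move=> fc; apply: ge_sup; first by exists (f 0), 0; rewrite //= hnorm_le1 rdot0l ler01.
by move=> _ [x + <-]; rewrite /= hnorm_le1; apply: fc.
Qed.

Lemma le_ball_sup (f : H -> R) (c : R) x :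
  (forall y, rdot y y <= 1 -> f y <= c) -> rdot x x <= 1 -> f x <= ball_sup f.
Proof.
move=> fc x1; apply: sup_upper_bound; last by exists x; rewrite //= hnorm_le1.
split; first by exists (f x), x; rewrite //= hnorm_le1.
by exists c => _ [y + <-]; rewrite /= hnorm_le1; apply: fc.
Qed.

Lemma le_ball_sup_homogeneous (f : H -> R) (c : R) :
    (forall (r : R) x, f (r%:C *: x) = r ^+ 2 * f x) ->
    (forall x, rdot x x <= 1 -> f x <= c) ->
  forall x, f x <= c * rdot x x.
Proof.
move=> f_homo fc x; have [->|nx] := eqVneq x 0.
  have -> : f 0 = 0 by rewrite -(scaler0 _ (0 : R)%:C) f_homo expr0n mul0r.
  by rewrite rdot0l mulr0.
have [r r1] := normalize nx.
have fr : r ^+ 2 * f x <= c by rewrite -f_homo fc // r1.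
move: r1; rewrite rdotZl rdotZr mulrA -expr2 => r1.
by rewrite -[f x]mul1r -r1 mulrAC ler_wpM2r ?rdotxx_ge0.
Qed.

Lemma rdot_le_hnorm x y : rdot x x <= 1 -> rdot y x <= hnorm ip y.
Proof.
move=> x1; set h := hnorm ip y.
have hh : h ^+ 2 = rdot y y by rewrite sqr_sqrtr // rdotxx_ge0.
have [h0|h_gt0] := eqVneq h 0.
  have /rdotxx_eq0 -> : rdot y y = 0 by rewrite -hh h0 expr0n.
  by rewrite rdot0l h0.
have h_ge0 : 0 <= h by rewrite sqrtr_ge0.
have := rdotxx_ge0 (y - h%:C *: x); rewrite !rdotE (rdotC x y) -hh => sq_ge0.
have := rdotxx_ge0 x; nra.
Qed.

Definition numrange_sup (T : H -> H) : R := ball_sup (fun x => rdot (T x) x).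

Lemma numrange_sup_quadratic (T : H -> H) (c : R) u : rdot u u = 1 -> 0 <= c ->
  (forall x, rdot (T x) x = c * rdot x x) -> numrange_sup T = c.
Proof.
move=> u1 c_ge0 TE; have Tc x : rdot x x <= 1 -> rdot (T x) x <= c.
  by move=> x1; rewrite TE -[leRHS]mulr1 ler_wpM2l.
apply/le_anti; rewrite ball_sup_le //=.
have u_le1 : rdot u u <= 1 by rewrite u1.
by have := le_ball_sup Tc u_le1; rewrite TE u1 mulr1.
Qed.

Lemma numrange_sup_trivial (T : H -> H) : (forall x : H, x = 0) -> numrange_sup T = 0.
Proof.
move=> H0; have T0 x : rdot x x <= 1 -> rdot (T x) x <= 0 by rewrite (H0 x) !rdot0r.
apply/le_anti; rewrite ball_sup_le //=.
have zero_le1 : rdot 0 0 <= 1 by rewrite rdot0l ler01.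
by have := le_ball_sup T0 zero_le1; rewrite rdot0r.
Qed.

Section NumericalRange.
Variable T : H -> H.
Hypothesis eT : reffect T.

Lemma rdot_le1 x : rdot x x <= 1 -> rdot (T x) x <= 1.
Proof. by case: eT => _ _ Tb x1; case/andP: (Tb x) => _ /le_trans; apply. Qed.

Lemma le_numrange_sup x : rdot x x <= 1 -> rdot (T x) x <= numrange_sup T.
Proof. exact: le_ball_sup rdot_le1. Qed.

Lemma numrange_sup_le1 : numrange_sup T <= 1.
Proof. exact: ball_sup_le rdot_le1. Qed.

Lemma numrange_sup_ge0 : 0 <= numrange_sup T.
Proof.
have [lT _ _] := eT.
by have := le_numrange_sup (x := 0); rewrite (lin0 lT) rdot0l ler01; apply.
Qed.

Lemma rdot_le_numrange_sup x : rdot (T x) x <= numrange_sup T * rdot x x.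
Proof.
have [lT _ _] := eT.
apply: (le_ball_sup_homogeneous (f := fun y => rdot (T y) y)) => [r y|];
  last exact: le_numrange_sup.
by rewrite /= (linZ lT) rdotZl rdotZr mulrA -expr2.
Qed.

Lemma hnorm_le_numrange_sup x : rdot x x <= 1 -> hnorm ip (T x) <= numrange_sup T.
Proof.
have [lT sT Tb] := eT; set q := numrange_sup T => x1.
have [q0|q_neq0] := eqVneq q 0.
  have Tx0 : rdot (T x) x = 0.
    apply/le_anti; case/andP: (Tb x) => -> _; rewrite andbT.
    by have := rdot_le_numrange_sup x; rewrite -/q q0 mul0r.
  by rewrite (reffect_qf_eq0 eT Tx0) hnormE rdot0l sqrtr0 q0.
have q_ge0 : 0 <= q := numrange_sup_ge0.
have q_gt0 : 0 < q by rewrite lt_def q_neq0.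
have Tq y : 0 <= rdot (T y) y <= q * rdot y y.
  by case/andP: (Tb y) => -> _; exact: rdot_le_numrange_sup.
have TTx := positive_sq_le lT sT Tq q_gt0 x.
rewrite hnormE -(ger0_norm q_ge0) -sqrtr_sqr ler_wsqrtr // expr2.
apply: (le_trans TTx); rewrite ler_wpM2l //.
by apply: (le_trans (rdot_le_numrange_sup x)); rewrite -[leRHS]mulr1 ler_wpM2l.
Qed.

Lemma opnorm_reffect : opnorm ip T = numrange_sup T.
Proof.
apply/le_anti/andP; split; first exact: ball_sup_le hnorm_le_numrange_sup.
apply: ball_sup_le => x x1; apply: le_trans (rdot_le_hnorm (T x) x1) _.
exact: (le_ball_sup hnorm_le_numrange_sup).
Qed.

Lemma numrange_sup_eq1 w : rdot w w = 1 -> T w = w -> numrange_sup T = 1.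
Proof.
move=> w1 Tw; apply/le_anti; rewrite numrange_sup_le1 /=.
have w_le1 : rdot w w <= 1 by rewrite w1.
by have := le_numrange_sup w_le1; rewrite Tw w1.
Qed.

End NumericalRange.

Lemma reffect_of_effect (T : H -> H) : effect ip T -> reffect T.
Proof.
case=> [[lT _] sT Tb]; split=> // [x y|x]; first by rewrite /rdot sT.
by case: (Tb x); rewrite !lecE => /andP[_ ->] /andP[_ ->].
Qed.

Lemma rdot_compl (T : H -> H) x : rdot (compl_op T x) x = rdot x x - rdot (T x) x.
Proof. by rewrite rdotDl rdotNl. Qed.

Lemma reffect_compl (T : H -> H) : reffect T -> reffect (compl_op T).
Proof.
case=> lT sT Tb; split=> [a x y|x y|x].
- by rewrite /compl_op lT scalerBr opprD addrACA.
- by rewrite /compl_op !rdotE sT.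
- by rewrite rdot_compl subr_ge0 lerBlDr lerDl andbC.
Qed.

Lemma rdot_mul_compl (T : H -> H) x : linear T -> rselfadjoint T ->
  rdot (comp_op T (compl_op T) x) x = rdot (T x) x - rdot (T x) (T x).
Proof.
by move=> lT sT; rewrite /comp_op /compl_op (linB lT) rdotDl rdotNl (sT (T x) x).
Qed.

Lemma reffect_mul_compl (T : H -> H) : reffect T -> reffect (comp_op T (compl_op T)).
Proof.
move=> eT; have [lT sT Tb] := eT; have [lT' _ _] := reffect_compl eT.
split=> [a x y|x y|x].
- by rewrite /comp_op lT' lT.
- by rewrite /comp_op /compl_op !(linB lT) !rdotE sT (sT (T x)) (sT x).
rewrite rdot_mul_compl // subr_ge0.
have Tb1 y : 0 <= rdot (T y) y <= 1 * rdot y y by rewrite mul1r.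
have := positive_sq_le lT sT Tb1 ltr01 x; rewrite mul1r => -> /=.
case/andP: (Tb x) => _; apply: le_trans; rewrite lerBlDr lerDl; exact: rdotxx_ge0.
Qed.

Definition shift (T : H -> H) (m : R) : H -> H := fun x => T x - m%:C *: x.

Lemma shift_linear (T : H -> H) (m : R) : linear T -> linear (shift T m).
Proof.
move=> lT a x y; rewrite /shift lT scalerDr scalerA mulrC -scalerA.
by rewrite scalerBr opprD addrACA.
Qed.

Lemma shift_rselfadjoint (T : H -> H) (m : R) :
  rselfadjoint T -> rselfadjoint (shift T m).
Proof. by move=> sT x y; rewrite /shift !rdotE sT. Qed.

Lemma rdot_shift (T : H -> H) (m : R) x :
  rdot (shift T m x) x = rdot (T x) x - m * rdot x x.
Proof. by rewrite /shift !rdotE. Qed.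

Lemma rdot_shift_sq (T : H -> H) (m : R) x : rdot (shift T m x) (shift T m x) =
  rdot (T x) (T x) - 2 * m * rdot (T x) x + m ^+ 2 * rdot x x.
Proof. by rewrite /shift !rdotE (rdotC x (T x)); ring. Qed.

Lemma trivial_effect_of_trivial_space (T : H -> H) :
  (forall x : H, x = 0) -> trivial_effect T.
Proof.
by move=> H0; exists 0; rewrite lexx ler01; split=> // x; rewrite [LHS]H0 [RHS]H0.
Qed.

Lemma no_nontrivial_projection (T : H -> H) :
  (forall x : H, x = 0) -> ~ nontrivial_projection ip T.
Proof. by move=> H0 [_ _ _ T_neq0 _]; apply: T_neq0; apply: funext => x; apply: H0. Qed.

Section EffectGap.
Variables (A : H -> H) (u : H).
Hypotheses (hA : effect ip A) (u1 : rdot u u = 1).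

Let eA : reffect A := reffect_of_effect hA.
Let eA' : reffect (compl_op A) := reffect_compl eA.
Let eB : reffect (comp_op A (compl_op A)) := reffect_mul_compl eA.
Let eB' : reffect (compl_op (comp_op A (compl_op A))) := reffect_compl eB.

(* M and m are the top and the bottom of the numerical range of A, and gap is
   W - D once the operator norms are replaced by numerical-range suprema. *)
Local Notation B := (comp_op A (compl_op A)).
Local Notation M := (numrange_sup A).
Local Notation m := (1 - numrange_sup (compl_op A)).
Local Notation gap := (numrange_sup A + numrange_sup (compl_op A) - 1
  - (numrange_sup B + numrange_sup (compl_op B) - 1)).

Let u_le1 : rdot u u <= 1. Proof. by rewrite u1. Qed.

Lemma rdot_ge_bot x : m * rdot x x <= rdot (A x) x.
Proof. by have := rdot_le_numrange_sup eA' x; rewrite rdot_compl; nra. Qed.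

Lemma bot_ge0 : 0 <= m.
Proof. by rewrite subr_ge0 numrange_sup_le1. Qed.

Lemma bot_le_top : m <= M.
Proof.
have := le_numrange_sup eA u_le1; have := le_numrange_sup eA' u_le1.
by rewrite rdot_compl u1; lra.
Qed.

Lemma numrange_sup_mul_compl_ge : 1 <= numrange_sup B + numrange_sup (compl_op B).
Proof.
have := le_numrange_sup eB u_le1; have := le_numrange_sup eB' u_le1.
by rewrite rdot_compl u1; lra.
Qed.

Lemma trivial_of_bot_eq_top : m = M -> trivial_effect A.
Proof.
move=> mM; have [lA sA _] := eA.
have qf_shift y : rdot (shift A m y) y = 0.
  have := rdot_ge_bot y; have := rdot_le_numrange_sup eA y.
  by rewrite rdot_shift -mM; nra.
have e_shift : reffect (shift A m).
  split=> [||y]; [exact: shift_linear | exact: shift_rselfadjoint |].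
  by rewrite qf_shift lexx rdotxx_ge0.
exists m; split; first by rewrite bot_ge0 mM numrange_sup_le1.
by move=> x; apply/eqP; rewrite -subr_eq0; apply/eqP/(reffect_qf_eq0 e_shift).
Qed.

Lemma gap_trivial : trivial_effect A -> gap = 0.
Proof.
case=> l [/andP[l_ge0 l_le1] Al]; have [lA sA _] := eA.
have qfA x : rdot (A x) x = l * rdot x x by rewrite Al rdotZl.
have qfA' x : rdot (compl_op A x) x = (1 - l) * rdot x x.
  by rewrite rdot_compl qfA; ring.
have qfB x : rdot (B x) x = (l - l ^+ 2) * rdot x x.
  by rewrite rdot_mul_compl // qfA Al rdotZl rdotZr; ring.
have qfB' x : rdot (compl_op B x) x = (1 - (l - l ^+ 2)) * rdot x x.
  by rewrite rdot_compl qfB; ring.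
have cA' : 0 <= 1 - l by rewrite subr_ge0.
have cB : 0 <= l - l ^+ 2 by nra.
have cB' : 0 <= 1 - (l - l ^+ 2) by nra.
rewrite (numrange_sup_quadratic u1 l_ge0 qfA) (numrange_sup_quadratic u1 cA' qfA').
by rewrite (numrange_sup_quadratic u1 cB qfB) (numrange_sup_quadratic u1 cB' qfB'); ring.
Qed.

Lemma rdot_sq_le_range x : m < M ->
  rdot (A x) (A x) <= (m + M) * rdot (A x) x - m * M * rdot x x.
Proof.
move=> mM; have [lA sA _] := eA.
have shift_range y : 0 <= rdot (shift A m y) y <= (M - m) * rdot y y.
  have := rdot_ge_bot y; have := rdot_le_numrange_sup eA y.
  by rewrite rdot_shift; move=> ? ?; apply/andP; split; nra.
have := positive_sq_le (shift_linear m lA) (shift_rselfadjoint m sA) shift_range _ x.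
by rewrite subr_gt0 rdot_shift_sq rdot_shift => /(_ mM); nra.
Qed.

Lemma gap_gt0 : m < M -> 0 < gap.
Proof.
move=> mM; have [lA sA _] := eA.
have [c [d [c_ge0 d_le1 cd cd_range]]] :=
  numerical_range_gap bot_ge0 mM (numrange_sup_le1 eA).
have qfB_range x : d * rdot x x <= rdot (B x) x <= c * rdot x x.
  rewrite rdot_mul_compl //; apply: cd_range; first exact: rdotxx_ge0.
  - exact: rdot_ge_bot.
  - exact: rdot_le_numrange_sup.
  - exact: rdot_sq_le_range.
  - by move=> t; have := rdotxx_ge0 (shift A t x); rewrite rdot_shift_sq; nra.
have P_le : numrange_sup B <= c.
  apply: ball_sup_le => x x1; case/andP: (qfB_range x) => _ /le_trans; apply.
  by rewrite -[leRHS]mulr1 ler_wpM2l.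
have Q_le : numrange_sup (compl_op B) <= 1 - d.
  apply: ball_sup_le => x x1; rewrite rdot_compl; case/andP: (qfB_range x) => dB _.
  have : (1 - d) * rdot x x <= 1 - d by rewrite -[leRHS]mulr1 ler_wpM2l ?subr_ge0.
  lra.
lra.
Qed.

Lemma gap_bounds : 0 <= gap <= 1.
Proof.
have := numrange_sup_mul_compl_ge; have := numrange_sup_le1 eA; have := bot_ge0.
move=> ? ? ?; apply/andP; split; last lra.
move: bot_le_top; rewrite le_eqVlt => /orP[/eqP/trivial_of_bot_eq_top/gap_trivial ->//|].
by move/gap_gt0/ltW.
Qed.

Lemma gap_eq0 : gap = 0 <-> trivial_effect A.
Proof.
split; last exact: gap_trivial.
move: bot_le_top; rewrite le_eqVlt => /orP[/eqP/trivial_of_bot_eq_top //|].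
by move/gap_gt0; rewrite lt_def => /andP[/eqP].
Qed.

Lemma gap_projection : nontrivial_projection ip A -> gap = 1.
Proof.
case=> _ AA _ A_neq0 A_neq_id; have [lA sA _] := eA.
have qfB x : rdot (B x) x = 0 * rdot x x.
  by rewrite rdot_mul_compl // -sA AA subrr mul0r.
have qfB' x : rdot (compl_op B x) x = 1 * rdot x x.
  by rewrite rdot_compl qfB !mul0r subr0 mul1r.
have [y Ay] : exists y, A y != 0.
  apply: contra_notP A_neq0 => no_y; apply: funext => y.
  by apply/eqP; apply: contra_notT no_y; exists y.
have [z A'z] : exists z, compl_op A z != 0.
  apply: contra_notP A_neq_id => no_z; apply: funext => z; apply/esym/eqP.
  by rewrite -subr_eq0; apply: contra_notT no_z; exists z.
have [r r1] := normalize Ay; have [s s1] := normalize A'z.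
rewrite (numrange_sup_eq1 eA r1); last by rewrite (linZ lA) AA.
rewrite (numrange_sup_eq1 eA' s1); last first.
  by rewrite /compl_op (linZ lA) (linB lA) AA subrr scaler0 subr0.
rewrite (numrange_sup_quadratic u1 _ qfB) ?(numrange_sup_quadratic u1 _ qfB') ?ler01 //.
ring.
Qed.

Lemma projection_of_gap : gap = 1 -> nontrivial_projection ip A.
Proof.
move=> gap1; have [lA sA _] := eA.
have S_le_Q : numrange_sup (compl_op A) <= numrange_sup (compl_op B).
  apply: ball_sup_le => x x1; apply: le_trans (le_numrange_sup eB' x1).
  by rewrite !rdot_compl rdot_mul_compl // lerB // lerBDr lerDl rdotxx_ge0.
have := numrange_sup_mul_compl_ge; have := numrange_sup_le1 eA.
have := numrange_sup_le1 eA'; have := numrange_sup_ge0 eB.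
move=> P_ge0 S_le1 M_le1 PQ_ge1.
have P0 : numrange_sup B = 0 by lra.
have AA x : A (A x) = A x.
  have qfB0 : rdot (B x) x = 0.
    apply/le_anti; have [_ _ /(_ x)/andP[-> _]] := eB.
    by have := rdot_le_numrange_sup eB x; rewrite P0 mul0r => ->.
  have := reffect_qf_eq0 eB qfB0; rewrite /comp_op /compl_op (linB lA).
  by move/eqP; rewrite subr_eq0 => /eqP.
case: hA => bA sA' _; split=> // [A0|A1].
- have : M <= 0 by apply: ball_sup_le => x _; rewrite A0 rdot0l.
  lra.
- have : numrange_sup (compl_op A) <= 0.
    by apply: ball_sup_le => x _; rewrite rdot_compl A1 subrr.
  lra.
Qed.

End EffectGap.

End PreHilbert.

Theorem mainTheorem9 (R : realType) (H : lmodType R[i]) (ip : H -> H -> R[i])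
  (hH : separable_hilbert ip) (A : H -> H) (hA : effect ip A) :
  [/\ 0 <= Wcoh ip A - Dcoh ip A <= 1,
      Wcoh ip A - Dcoh ip A = 0 <-> trivial_effect A
    & Wcoh ip A - Dcoh ip A = 1 <-> nontrivial_projection ip A].
Proof.
case: hH => hip _ _; have eA := reffect_of_effect hA.
have eB := reffect_mul_compl hip eA.
have [eA' eB'] := (reffect_compl hip eA, reffect_compl hip eB).
rewrite /Wcoh /Dcoh !(opnorm_reffect hip) //.
have [H0|[u u1]] := trivial_or_unit hip; last first.
  split; [exact: gap_bounds hA u1 | exact: gap_eq0 hA u1 |].
  by split; [exact: projection_of_gap hA u1 | exact: gap_projection hA u1].
rewrite !(numrange_sup_trivial hip) // add0r subrr lexx ler01.
split=> //; first by split=> // _; apply: trivial_effect_of_trivial_space.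
split=> [/eqP|/(no_nontrivial_projection H0)] //.
by rewrite eq_sym oner_eq0.
Qed.
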